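(* Let $m$ be odd and $L=L'$. For $a\in\mathcal{R}$ the Lee weight of $ev(a)=(Tr(ax))_{x\in L'}$ is: (a) $0$ if $a=0$; (b) $3^{3m}$ if $a=(u-1)^2a_3$ with $a_3\in\mathbb{F}_{3^m}^*$; (c) $3^{3m}-3^{2m}$ if $a\in\mathcal{R}\setminus\langle (u-1)^2\rangle$.
   Context: Let $R=\mathbb{F}_3[u]/(u^3-1)$ and $\mathcal{R}=\mathbb{F}_{3^m}[u]/(u^3-1)=\mathbb{F}_{3^m}+u\mathbb{F}_{3^m}+u^2\mathbb{F}_{3^m}$. Every element of $\mathcal{R}$ is uniquely $x_1+x_2(u-1)+x_3(u-1)^2$ with $x_i\in\mathbb{F}_{3^m}$; units are those with $x_1\neq0$. $\langle (u-1)^2\rangle=\{(u-1)^2a_3:a_3\in\mathbb{F}_{3^m}\}$. $Tr:\mathcal{R}\to R$ is $Tr(a+ub+u^2c)=tr(a)+u\,tr(b)+u^2tr(c)$, with $tr$ the absolute trace $\mathbb{F}_{3^m}\to\mathbb{F}_3$. $\mathcal{Q}$ denotes the nonzero squares of $\mathbb{F}_{3^m}$; $L'=\{x_1+x_2(u-1)+x_3(u-1)^2:x_1\in\mathcal{Q},x_2,x_3\in\mathbb{F}_{3^m}\}$. The Gray map $\phi:R\to\mathbb{F}_3^3$ is $\phi(a'+ub'+u^2c')=(a',b',c')$, extended coordinatewise to $R^n\to\mathbb{F}_3^{3n}$; the Lee weight $w_L(v)$ of $v\in R^n$ is the Hamming weight of $\phi(v)$. *)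

From HB Require Import structures.
From mathcomp Require Import all_boot all_order all_algebra.
Set Implicit Arguments. Unset Strict Implicit. Unset Printing Implicit Defensive.
Import GRing.Theory.
Local Open Scope ring_scope.

(* Elements of  calR = F[u]/(u^3-1)  are represented by triples (a,b,c)
   standing for a + u b + u^2 c, with F = F_{3^m}. *)
Section CalR.
Variable F : finFieldType.

Definition calR := (F * F * F)%type.

Definition rA (p : calR) : F := p.1.1.
Definition rB (p : calR) : F := p.1.2.
Definition rC (p : calR) : F := p.2.

Definition mkR (a b c : F) : calR := (a, b, c).

Definition addR (p q : calR) : calR :=
  mkR (rA p + rA q) (rB p + rB q) (rC p + rC q).

(* product modulo u^3 = 1 *)
Definition mulR (p q : calR) : calR :=
  mkR (rA p * rA q + rB p * rC q + rC p * rB q)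
      (rA p * rB q + rB p * rA q + rC p * rC q)
      (rA p * rC q + rB p * rB q + rC p * rA q).

Definition cstR (x : F) : calR := mkR x 0 0.

Definition um1 : calR := mkR (-1) 1 0.

Definition eltR (x1 x2 x3 : F) : calR :=
  addR (cstR x1) (addR (mulR (cstR x2) um1) (mulR (cstR x3) (mulR um1 um1))).

Definition ideal_um1sq : {set calR} :=
  [set mulR (mulR um1 um1) (cstR a3) | a3 : F].

Definition Qsq : {set F} := [set x : F | (x != 0) && [exists y : F, y ^+ 2 == x]].

Definition Lprime : {set calR} :=
  [set eltR x.1.1 x.1.2 x.2 | x in [set x : F * F * F | x.1.1 \in Qsq]].

(* absolute trace F_{3^m} -> F_3, with values viewed inside F (prime subfield) *)
Definition abstr (m : nat) (x : F) : F := \sum_(i < m) x ^+ (3 ^ i).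

Definition TrR (m : nat) (p : calR) : calR :=
  mkR (abstr m (rA p)) (abstr m (rB p)) (abstr m (rC p)).

(* Lee weight of a single element of R = Hamming weight of its Gray image (a',b',c') *)
Definition leeR (p : calR) : nat :=
  addn (addn (nat_of_bool (rA p != 0)) (nat_of_bool (rB p != 0))) (nat_of_bool (rC p != 0)).

Definition lee_ev (m : nat) (a : calR) : nat :=
  (\sum_(x in Lprime) leeR (TrR m (mulR a x)))%N.

End CalR.

From HB Require Import structures.
From mathcomp Require Import all_boot all_order all_algebra all_field.
From mathcomp Require Import ring zify.
Set Implicit Arguments. Unset Strict Implicit. Unset Printing Implicit Defensive.
Import GRing.Theory.
Local Open Scope ring_scope.

(* In characteristic 3, u^3 - 1 = t^3 with t = u - 1, so calR = F[t]/(t^3), and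
   in the basis 1, t, t^2 the product of a = (a1, a2, a3) and x = (x1, x2, x3)
   is (a1 x1, a1 x2 + a2 x1, a1 x3 + a2 x2 + a3 x1). The Lee weight of Tr(a x)
   depends only on the traces of these three coordinates, and the trace takes
   each value of F_3 exactly 3^(m-1) times. When a1 != 0 (resp. a1 = 0 and
   a2 != 0), the last coordinates are affine bijections of x3 and x2 (resp. of
   x2 alone), so summing over them runs the traces uniformly through F_3 and
   each x1 in Q contributes 2 3^(2m). When a = a3 t^2 only tr (a3 x1) matters;
   as m is odd, 3^m = 3 mod 4, so -1 is not a square, F^* is the disjoint
   union of Q and -Q, and tr (a3 x1) is nonzero for exactly 3^(m-1) squares x1. *)

Lemma finField_two_neq0 (F : finFieldType) : odd #|F| -> 2%:R != 0 :> F.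
Proof.
move=> oddF; apply: contraTneq (finNzRing_gt1 F) => two0.
have pchar2 : 2%N \in [pchar F] by rewrite inE two0 eqxx.
have := pprimeChar_pgroup pchar2; rewrite /pgroup.pgroup cardsT => nat2.
by rewrite (pnat_1 nat2) // -odd_2'nat.
Qed.

Section OddFiniteField.
Variable F : finFieldType.
Hypothesis oddF : odd #|F|.
Local Notation Q := (Qsq F).

Lemma sqrf_Qsq (y : F) : y != 0 -> y ^+ 2 \in Q.
Proof. by move=> y0; rewrite inE sqrf_eq0 y0; apply/existsP; exists y. Qed.

Lemma eqr_opp_self (y : F) : (y == - y) = (y == 0).
Proof.
rewrite -subr_eq0 opprK -mulr2n -mulr_natl mulf_eq0.
by rewrite (negbTE (finField_two_neq0 oddF)).
Qed.

Lemma card_sqrf_eq (y : F) : y != 0 -> #|[set x : F | x ^+ 2 == y ^+ 2]| = 2%N.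
Proof.
move=> y0; have -> : [set x : F | x ^+ 2 == y ^+ 2] = [set y; - y].
  by apply/setP => x; rewrite !inE eqf_sqr.
by rewrite cards2 eqr_opp_self y0.
Qed.

Lemma card_Qsq : (#|Q| * 2 = #|F|.-1)%N.
Proof.
have card_sqrt (s : F) : s \in Q -> #|[set x | (x != 0) && (x ^+ 2 == s)]| = 2%N.
  rewrite inE => /andP[s0 /existsP[y /eqP eq_s]]; subst s.
  have y0 : y != 0 by rewrite -sqrf_eq0.
  rewrite -[RHS](card_sqrf_eq y0); apply: eq_card => x; rewrite !inE.
  have [->|//] := eqVneq x 0.
  by rewrite expr0n /= eq_sym sqrf_eq0 (negbTE y0).
rewrite -sum_nat_const -(eq_bigr _ card_sqrt).
under eq_bigr => s _ do rewrite -sum1dep_card.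
rewrite -(partition_big (fun x => x ^+ 2) (mem Q)) => [|x]; last exact: sqrf_Qsq.
by rewrite sum1dep_card -(cardsC1 (0 : F)); apply: eq_card => x; rewrite !inE.
Qed.

End OddFiniteField.

Section ThreeModFour.
Variable F : finFieldType.
Hypothesis cardF_mod4 : (#|F| %% 4 = 3)%N.
Local Notation Q := (Qsq F).

Let oddF : odd #|F|.
Proof. by rewrite (divn_eq #|F| 4) cardF_mod4 oddD oddM andbF. Qed.

Lemma sqrf_neqN1 (y : F) : y ^+ 2 != -1.
Proof.
apply/eqP => yN1; have /eqP : y = - y.
  (* y = y ^+ #|F| = (y ^+ 4) ^+ k * y ^+ 3 = - y *)
  rewrite -{1}(expf_card y) (divn_eq #|F| 4) cardF_mod4 exprD mulnC exprM.
  by rewrite (exprM y 2 2) yN1 sqrrN expr1n expr1n mul1r exprS yN1 mulrN1.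
rewrite (eqr_opp_self oddF) => /eqP y0; move/eqP: yN1.
by rewrite y0 expr0n /= eq_sym oppr_eq0 oner_eq0.
Qed.

Lemma Qsq_opp_disjoint : [disjoint Q & [set - x | x in Q]].
Proof.
rewrite -setI_eq0; apply/eqP/setP => x; rewrite !inE.
apply/negP => /andP[Qx /imsetP[z Qz xz]]; rewrite {}xz in Qx.
move: Qx Qz; rewrite !inE oppr_eq0.
move=> /andP[z0 /existsP[s /eqP sN]] /andP[_ /existsP[t /eqP tz]].
have t0 : t != 0 by rewrite -sqrf_eq0 tz.
by have := sqrf_neqN1 (s / t); rewrite expr_div_n sN tz mulNr divff ?eqxx.
Qed.

Lemma nonzero_Qsq_cover : [set x : F | x != 0] = Q :|: [set - x | x in Q].
Proof.
apply/esym/eqP; rewrite eqEcard; apply/andP; split.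
  apply/subsetP => x; rewrite !inE => /orP[/andP[] // | /imsetP[z]].
  by rewrite inE => /andP[z0 _] ->; rewrite oppr_eq0.
rewrite cardsU (disjoint_setI0 Qsq_opp_disjoint) cards0 subn0.
rewrite card_imset; last exact: oppr_inj.
rewrite addnn -muln2 card_Qsq // -(cardsC1 (0 : F)).
by apply/eq_leq/eq_card => x; rewrite !inE.
Qed.

Lemma sum_nonzero_Qsq (f : F -> nat) :
  (\sum_(x | x != 0%R) f x = \sum_(x in Q) (f x + f (- x)%R))%N.
Proof.
rewrite big_split /= -(big_imset _ (in2W oppr_inj)) -bigU ?Qsq_opp_disjoint //.
by apply: eq_bigl => x; move/setP/(_ x): nonzero_Qsq_cover; rewrite !inE.
Qed.

End ThreeModFour.

Section CharThree.
Variable F : finFieldType.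
Hypothesis F_pchar3 : 3%N \in [pchar F].

Let char3_eq (x y e : F) : x = y + 3%:R * e -> x = y.
Proof. by rewrite (pcharf0 F_pchar3) mul0r addr0. Qed.

Lemma eltRE (x1 x2 x3 : F) : eltR x1 x2 x3 = mkR (x1 - x2 + x3) (x2 + x3) x3.
Proof.
rewrite /eltR /addR /mulR /cstR /um1 /mkR /rA /rB /rC /=.
by congr (_, _, _); [ring | apply: (char3_eq (e := - x3)); ring | ring].
Qed.

Lemma natr_ord3_inj : injective (fun k : 'I_3 => k%:R : F).
Proof.
suff le_eq (i j : 'I_3) : (i <= j)%N -> i%:R = j%:R :> F -> i = j.
  by move=> i j /= ij; case: (leqP i j) => [/le_eq -> // | /ltnW /le_eq ->].
move=> le_ij /eqP; rewrite eq_sym -subr_eq0 -natrB // -(dvdn_pcharf F_pchar3).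
by case/dvdnP=> q eq_q; apply: ord_inj; have := ltn_ord j; lia.
Qed.

Definition coords (p : calR F) : F * F * F := (rA p + rB p + rC p, rB p - rC p, rC p).

Lemma coordsK : cancel coords (fun x => eltR x.1.1 x.1.2 x.2).
Proof.
move=> [[a b] c]; rewrite eltRE /coords /mkR /rA /rB /rC /=.
by congr (_, _, _); [apply: (char3_eq (e := c)) |]; ring.
Qed.

Lemma eltRK : cancel (fun x => eltR x.1.1 x.1.2 x.2) coords.
Proof.
move=> [[x1 x2] x3]; rewrite eltRE /coords /mkR /rA /rB /rC /=.
by congr (_, _, _); [apply: (char3_eq (e := x3)) |]; ring.
Qed.

Lemma mulR_eltR (a1 a2 a3 x1 x2 x3 : F) :
  mulR (eltR a1 a2 a3) (eltR x1 x2 x3) =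
  eltR (a1 * x1) (a1 * x2 + a2 * x1) (a1 * x3 + a2 * x2 + a3 * x1).
Proof.
rewrite !eltRE /mulR /mkR /rA /rB /rC /=.
by congr (_, _, _);
  [ apply: (char3_eq (e := a3 * x3)) | apply: (char3_eq (e := a3 * x3 - a2 * x2))
  | apply: (char3_eq (e := a3 * x3)) ]; ring.
Qed.

Lemma mulR_um1sq (c : F) : mulR (mulR (um1 F) (um1 F)) (cstR c) = eltR 0 0 c.
Proof.
rewrite eltRE /mulR /um1 /cstR /mkR /rA /rB /rC /=.
by congr (_, _, _); [| apply: (char3_eq (e := - c)) |]; ring.
Qed.

Lemma leeR_eltR_nat (i j k : nat) :
  leeR (eltR i%:R j%:R k%:R : calR F) =
  (~~ (3 %| i + 2 * j + k) + ~~ (3 %| j + k) + ~~ (3 %| k))%N.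
Proof.
rewrite eltRE /leeR /mkR /rA /rB /rC /=.
have -> : i%:R - j%:R + k%:R = (i + 2 * j + k)%:R :> F.
  by apply: (char3_eq (e := - j%:R)); rewrite !natrD; ring.
by rewrite -natrD !(dvdn_pcharf F_pchar3).
Qed.

Lemma sum_leeR_eltR (i : 'I_3) :
  (\sum_(j < 3) \sum_(k < 3) leeR (eltR i%:R j%:R k%:R : calR F) = 18)%N.
Proof.
under eq_bigr => j _ do under eq_bigr => k _ do rewrite leeR_eltR_nat.
by case: i => [[|[|[|]]]] //= _; rewrite !big_ord_recr !big_ord0.
Qed.

Lemma sum_leeR_eltR0 (j : 'I_3) :
  (\sum_(k < 3) leeR (eltR 0%R j%:R k%:R : calR F) = 6)%N.
Proof.
under eq_bigr => k _ do rewrite -[0%R]/(0%:R : F) leeR_eltR_nat.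
by case: j => [[|[|[|]]]] //= _; rewrite !big_ord_recr !big_ord0.
Qed.

Lemma leeR_eltR00 (t : F) : leeR (eltR 0 0 t) = (3 * (t != 0%R))%N.
Proof. by rewrite eltRE /leeR /mkR /rA /rB /rC /= subr0 !add0r; case: (t != 0). Qed.

End CharThree.

Section AbsoluteTrace.
Variables (F : finFieldType) (m : nat).
Hypothesis cardF : #|F| = (3 ^ m)%N.

Local Notation tr := (@abstr F m).

Lemma pchar3 : 3%N \in [pchar F].
Proof. exact: card_finPcharP cardF _. Qed.

Lemma m_gt0 : (0 < m)%N.
Proof. by case: m cardF (finNzRing_gt1 F) => // ->. Qed.

Fact abstr_is_nmod_morphism : nmod_morphism tr.
Proof.
rewrite /abstr; split=> [|x y]; first by rewrite big1 // => i _; rewrite expr0n expn_eq0.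
rewrite -big_split; apply: eq_bigr => i _; apply: exprDn_pchar.
by rewrite pnatX pnatE // pchar3.
Qed.

HB.instance Definition _ := GRing.isNmodMorphism.Build F F tr abstr_is_nmod_morphism.

Lemma abstr_cube x : tr x ^+ 3 = tr x.
Proof.
rewrite -(pFrobenius_autE pchar3) /abstr rmorph_sum.
rewrite (eq_bigr (fun i : 'I_m => x ^+ (3 ^ i.+1))); last first.
  by move=> i _; rewrite /= pFrobenius_autE -exprM -expnSr.
case: m m_gt0 cardF => // n _ cardF'.
rewrite big_ord_recr big_ord_recl /= -cardF' expf_card expn0 expr1 addrC.
by congr (_ + _); apply: eq_bigr.
Qed.

Lemma abstr_ord3 x : exists k : 'I_3, tr x = k%:R.
Proof.
have : tr x * (tr x - 1) * (tr x - 2%:R) = 0.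
  have -> : tr x * (tr x - 1) * (tr x - 2%:R)
          = (tr x ^+ 3 - tr x) - 3%:R * (tr x ^+ 2 - tr x) by ring.
  by rewrite abstr_cube (pcharf0 pchar3) subrr mul0r subr0.
move/eqP; rewrite !mulf_eq0 !subr_eq0 => /orP[/orP[]|] /eqP ->.
- by exists ord0.
- by exists (@Ordinal 3 1 isT).
- by exists (@Ordinal 3 2 isT).
Qed.

Lemma sum_abstr_ord3 x (f : F -> nat) :
  (\sum_(k < 3) (tr x == k%:R) * f k%:R)%N = f (tr x).
Proof.
have [k0 ->] := abstr_ord3 x.
rewrite (bigD1 k0) //= eqxx mul1n big1 ?addn0 // => k nk.
by case: eqP => [/(natr_ord3_inj pchar3) eq_k | _]; rewrite ?eq_k ?eqxx in nk.
Qed.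

Definition abstr_poly : {poly F} := \sum_(i < m) 'X^(3 ^ i).

Lemma horner_abstr_poly x : abstr_poly.[x] = tr x.
Proof. by rewrite horner_sum; apply: eq_bigr => i _; rewrite hornerXn. Qed.

Lemma abstr_poly_neq0 : abstr_poly != 0.
Proof.
apply/eqP => /(congr1 (fun p : {poly F} => p`_1)).
rewrite coef0 coef_sum; case: m m_gt0 => // n _.
rewrite big_ord_recl /= expn0 coefXn eqxx big1 ?addr0; first by move/eqP; rewrite oner_eq0.
by move=> i _; rewrite coefXn ltn_eqF // -{1}(expn0 3) ltn_exp2l.
Qed.

Lemma size_abstr_poly : (size abstr_poly <= (3 ^ m.-1).+1)%N.
Proof.
apply: (leq_trans (size_sum _ _ _)); apply/bigmax_leqP => i _.
by rewrite size_polyXn ltnS leq_exp2l // -ltnS prednK ?m_gt0.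
Qed.

Local Notation fiber t := [set y : F | tr y == t%R].

Lemma card_abstr_kernel_le : (#|fiber 0| <= 3 ^ m.-1)%N.
Proof.
have := max_poly_roots abstr_poly_neq0 (rs := enum (fiber 0)).
rewrite enum_uniq -cardE => /(_ _ isT) lt_size.
rewrite -ltnS (leq_trans _ size_abstr_poly) // lt_size //.
by apply/allP => y; rewrite mem_enum inE /root horner_abstr_poly.
Qed.

Lemma card_abstr_fiber_le t : (#|fiber t| <= #|fiber 0|)%N.
Proof.
have [y0 /eqP tr_y0 | fiber_t0] := pickP [pred y | tr y == t]; last first.
  by rewrite (@eq_card0 _ (fiber t)) // => y; rewrite inE; apply: fiber_t0.
rewrite -(card_imset _ (addIr (- y0))).
apply/subset_leq_card/subsetP => z /imsetP[y]; rewrite !inE => /eqP tr_y ->.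
by rewrite raddfB /= tr_y tr_y0 subrr.
Qed.

Lemma sum_abstr_fiber (f : F -> nat) :
  (\sum_y f (tr y) = \sum_(k < 3) #|fiber k%:R| * f k%:R)%N.
Proof.
under eq_bigr => y _ do rewrite -(sum_abstr_ord3 y f).
rewrite exchange_big; apply: eq_bigr => k _.
rewrite -big_distrl /=; congr (_ * _)%N.
by rewrite -sum1dep_card [RHS]big_mkcond; apply: eq_bigr => y _; case: eqP.
Qed.

Lemma card_abstr_fiber (k : 'I_3) : #|fiber k%:R| = (3 ^ m.-1)%N.
Proof.
have le_fiber (j : 'I_3) : (#|fiber j%:R| <= 3 ^ m.-1)%N.
  exact: leq_trans (card_abstr_fiber_le _) card_abstr_kernel_le.
have sum_fibers : (\sum_(j < 3) #|fiber j%:R| = \sum_(j < 3) 3 ^ m.-1)%N.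
  have := sum_abstr_fiber (fun=> 1%N); rewrite sum1_card cardF.
  rewrite sum_nat_const card_ord -expnS prednK ?m_gt0 // => ->.
  by apply: eq_bigr => j _; rewrite muln1.
have [_] := leqif_sum (fun j (_ : true) => leqif_eq (le_fiber j)).
by rewrite sum_fibers eqxx => /esym/forall_inP/(_ k isT)/eqP.
Qed.

Lemma sum_abstr (f : F -> nat) :
  (\sum_y f (tr y) = 3 ^ m.-1 * \sum_(k < 3) f k%:R)%N.
Proof.
by rewrite sum_abstr_fiber big_distrr; apply: eq_bigr => k _; rewrite card_abstr_fiber.
Qed.

Lemma sum_abstr_affine (f : F -> nat) (c b : F) : c != 0 ->
  (\sum_y f (tr (c * y + b)%R) = 3 ^ m.-1 * \sum_(k < 3) f k%:R)%N.
Proof.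
move=> c0; rewrite -sum_abstr [RHS](reindex_inj (h := fun y => c * y + b)) //.
by move=> x y /addIr /(mulfI c0).
Qed.

Lemma expn_pred3 : (3 ^ m = 3 * 3 ^ m.-1)%N.
Proof. by rewrite -expnS prednK ?m_gt0. Qed.

Lemma TrR_eltR (x1 x2 x3 : F) : TrR m (eltR x1 x2 x3) = eltR (tr x1) (tr x2) (tr x3).
Proof. by rewrite !(eltRE pchar3) /TrR /mkR /rA /rB /rC /= !raddfD /= raddfN. Qed.

Lemma lee_ev_eltR (a1 a2 a3 : F) :
  lee_ev m (eltR a1 a2 a3) = (\sum_(x1 in Qsq F) \sum_x2 \sum_x3
    leeR (eltR (tr (a1 * x1)%R) (tr (a1 * x2 + a2 * x1)%R)
               (tr (a1 * x3 + a2 * x2 + a3 * x1)%R)))%N.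
Proof.
rewrite /lee_ev /Lprime big_imset => [|x y _ _]; last exact: (can_inj (eltRK pchar3)).
rewrite [RHS]pair_big [RHS]pair_big /=; apply: eq_big => [[[x1 x2] x3]|x _].
  by rewrite !inE !andbT.
by rewrite (mulR_eltR pchar3) TrR_eltR.
Qed.

Lemma card_Qsq_weight : (#|Qsq F| * 2 * 3 ^ (2 * m) = 3 ^ (3 * m) - 3 ^ (2 * m))%N.
Proof.
rewrite card_Qsq ?cardF ?oddX ?orbT // -subn1 mulnBl mul1n -expnD.
by rewrite (_ : m + 2 * m = 3 * m)%N //; lia.
Qed.

Lemma lee_ev_unit (a1 a2 a3 : F) : a1 != 0 ->
  lee_ev m (eltR a1 a2 a3) = (3 ^ (3 * m) - 3 ^ (2 * m))%N.
Proof.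
move=> a1_0; rewrite lee_ev_eltR -card_Qsq_weight -mulnA -sum_nat_const.
apply: eq_bigr => x1 _; have [i tr_x1] := abstr_ord3 (a1 * x1).
under eq_bigr => x2 _ do under eq_bigr => x3 _ do rewrite -addrA.
under eq_bigr => x2 _ do rewrite (sum_abstr_affine (fun t => leeR (eltR _ _ t))) //.
rewrite -big_distrr /= (sum_abstr_affine (fun t => \sum_(k < 3) leeR (eltR _ t k%:R)))%N //.
rewrite tr_x1 (sum_leeR_eltR pchar3) (_ : 2 * m = m + m)%N ?expnD ?expn_pred3; last lia.
by move: (3 ^ m.-1)%N => n; nia.
Qed.

Lemma lee_ev_nonunit (a2 a3 : F) : a2 != 0 ->
  lee_ev m (eltR 0 a2 a3) = (3 ^ (3 * m) - 3 ^ (2 * m))%N.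
Proof.
move=> a2_0; rewrite lee_ev_eltR -card_Qsq_weight -mulnA -sum_nat_const.
apply: eq_bigr => x1 _; have [j tr_x1] := abstr_ord3 (a2 * x1).
under eq_bigr => x2 _ do under eq_bigr => x3 _ do rewrite !mul0r !add0r raddf0.
under eq_bigr => x2 _ do rewrite sum_nat_const.
rewrite -big_distrr /= (sum_abstr_affine (fun t => leeR (eltR 0 _ t))) //.
rewrite tr_x1 (sum_leeR_eltR0 pchar3) (eq_card (B := F)) // cardF.
rewrite (_ : 2 * m = m + m)%N ?expnD ?expn_pred3; last lia.
by move: (3 ^ m.-1)%N => n; nia.
Qed.

Lemma lee_ev0 : lee_ev m (mkR (0 : F) 0 0) = 0%N.
Proof.
rewrite /lee_ev big1 // => x _.
by rewrite /mulR /TrR /leeR /mkR /rA /rB /rC /= !mul0r !add0r raddf0 eqxx.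
Qed.

Hypothesis m_odd : odd m.

Lemma cardF_mod4 : (#|F| %% 4 = 3)%N.
Proof.
rewrite cardF -(odd_double_half m) m_odd add1n -mul2n expnS expnM.
by rewrite -modnMmr -modnXm exp1n.
Qed.

Lemma sum_abstr_neq0 (c : F) : c != 0 ->
  (\sum_x (tr (c * x)%R != 0%R) = 3 ^ m.-1 * 2)%N.
Proof.
move=> c0; under eq_bigr => x _ do rewrite -[c * x]addr0.
rewrite (sum_abstr_affine (fun t => t != 0%R)) //; congr (_ * _)%N.
by rewrite !big_ord_recr big_ord0 -!(dvdn_pcharf pchar3).
Qed.

Lemma sum_Qsq_abstr_neq0 (c : F) : c != 0 ->
  (\sum_(x in Qsq F) (tr (c * x)%R != 0%R) = 3 ^ m.-1)%N.
Proof.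
move=> c0; have := sum_abstr_neq0 c0; rewrite (bigD1 0) //= mulr0 raddf0 eqxx add0n.
rewrite (sum_nonzero_Qsq cardF_mod4 (fun x => tr (c * x) != 0%R)).
under eq_bigr => x _ do rewrite mulrN raddfN oppr_eq0 addnn -mul2n.
by rewrite -big_distrr /= mulnC => /eqP; rewrite eqn_pmul2r // => /eqP.
Qed.

Lemma lee_ev_ideal (c : F) : c != 0 -> lee_ev m (eltR 0 0 c) = (3 ^ (3 * m))%N.
Proof.
move=> c0; rewrite lee_ev_eltR.
under eq_bigr => x1 _ do under eq_bigr => x2 _ do under eq_bigr => x3 _ do
  rewrite !mul0r !add0r raddf0 (leeR_eltR00 pchar3).
under eq_bigr => x1 _ do under eq_bigr => x2 _ do rewrite sum_nat_const.
under eq_bigr => x1 _ do rewrite sum_nat_const.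
rewrite -!big_distrr /= sum_Qsq_abstr_neq0 // (eq_card (B := F)) // cardF.
rewrite (_ : 3 * m = m + m + m)%N ?expnD ?expn_pred3; last lia.
by move: (3 ^ m.-1)%N => n; nia.
Qed.

End AbsoluteTrace.

Theorem theorem5p4 (F : finFieldType) (m : nat) (hm : odd m)
    (hF : #|F| = (3 ^ m)%N) :
  lee_ev m (mkR (0%R : F) 0%R 0%R) = 0%N /\
  (forall a3 : F, a3 != 0%R ->
     lee_ev m (mulR (mulR (um1 F) (um1 F)) (cstR a3)) = (3 ^ (3 * m))%N) /\
  (forall a : calR F, a \notin ideal_um1sq F ->
     lee_ev m a = (3 ^ (3 * m) - 3 ^ (2 * m))%N).
Proof.
have F_pchar3 := pchar3 hF.
split; [exact: lee_ev0 | split].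
  by move=> c c0; rewrite (mulR_um1sq F_pchar3) lee_ev_ideal.
move=> a; rewrite -(coordsK F_pchar3 a); case: (coords a) => [[a1 a2] a3] /= a_notin.
have [a1_0 | /(lee_ev_unit hF) -> //] := eqVneq a1 0%R; subst a1.
have [a2_0 | /(lee_ev_nonunit hF) -> //] := eqVneq a2 0%R; subst a2.
by case/negP: a_notin; rewrite -(mulR_um1sq F_pchar3); apply/imsetP; exists a3.
Qed.
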